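(* Let $n\ge2$ and suppose $(y,z)$ is a $C^1$ solution with $y,z>0$ on $[0,\infty)$ of \[\dot y=z^2(n+1-y)-ny,\qquad \dot z=\tfrac{n+1}{n}z(n-1+y)-(n+z^2)z,\] such that $(y,z)\to(0,0)$ as $t\to\infty$. Then $\dfrac{z^2}{y}\to\dfrac{n^2-2}{n(n+1)}$ as $t\to\infty$. *)

From Stdlib Require Export Reals.
From Coquelicot Require Export Coquelicot.

(** Along the solution, [w = z^2/y] obeys the perturbed logistic equation
    [w' = w (a - b w + e)] with [a = (n^2 - 2)/n], [b = n + 1] and the
    perturbation [e = 2 (n+1)/n y - z^2] tending to [0].  For [v = ln w] this
    reads [v' = a - b e^v + e], so once [|e|] is small, [v'] is bounded away
    from [0] with the right sign whenever [w] lies outside a small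
    neighbourhood of [a/b] -- uniformly, also where [w] is close to [0],
    which is why one works with [ln w] rather than [w].  Hence [v] is driven
    into that neighbourhood in finite time and cannot leave it again. *)

From Stdlib Require Import Lra Classical.
Open Scope R_scope.

Lemma is_derive_continuity_pt (f : R -> R) (x l : R) :
  is_derive f x l -> continuity_pt f x.
Proof.
  intros Hf. apply continuity_pt_filterlim.
  exact (ex_derive_continuous f x (ex_intro _ l Hf)).
Qed.

Lemma is_derive_nonneg_at_left_max (f : R -> R) (x l delta : R) :
  0 < delta -> is_derive f x l ->
  (forall u, x - delta < u < x -> f u <= f x) -> 0 <= l.
Proof.
  intros Hdelta Hf Hmax. apply is_derive_Reals in Hf.
  apply Rnot_lt_le. intros Hl.
  destruct (Hf (- l / 2)) as [[r Hr] Hquot]; [lra|]. simpl in Hquot.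
  set (h := - Rmin (delta / 2) (r / 2)).
  assert (Hh1 := Rmin_l (delta / 2) (r / 2)).
  assert (Hh2 := Rmin_r (delta / 2) (r / 2)).
  assert (Hh : 0 < Rmin (delta / 2) (r / 2)) by (apply Rmin_glb_lt; lra).
  assert (Hq : Rabs ((f (x + h) - f x) / h - l) < - l / 2).
  { apply Hquot; unfold h; [lra|].
    rewrite Rabs_Ropp, Rabs_pos_eq; lra. }
  apply Rabs_def2 in Hq.
  assert (Hfxh := Hmax (x + h) ltac:(unfold h; lra)).
  assert (0 <= (f (x + h) - f x) / h); [|lra].
  replace ((f (x + h) - f x) / h) with ((f x - f (x + h)) / (- h))
    by (field; unfold h; lra).
  apply Rdiv_le_0_compat; unfold h in *; lra.
Qed.

Section Trapping.

Variables (f df : R -> R) (T c k : R).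
Hypothesis Hk : 0 < k.
Hypothesis Hf : forall t, T <= t -> is_derive f t (df t).
Hypothesis Hdf : forall t, T <= t -> c < f t -> df t <= - k.

Lemma below_forever_after (u s : R) :
  T <= u <= s -> f u <= c -> f s <= c.
Proof.
  intros [HTu Hus] Hfu. apply Rnot_lt_le. intros Hfs.
  destruct (continuity_ab_maj f u s Hus) as [m [Hmax Hm]].
  { intros x Hx. apply (is_derive_continuity_pt _ _ _ (Hf x ltac:(lra))). }
  assert (Hfm := Hmax s ltac:(lra)).
  assert (Hum : u < m).
  { destruct (proj1 Hm) as [Hum|Hum]; [exact Hum|]. subst m. lra. }
  assert (Hdfm := Hdf m ltac:(lra) ltac:(lra)).
  assert (Hnonneg := is_derive_nonneg_at_left_max f m (df m) (m - u) ltac:(lra)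
            (Hf m ltac:(lra)) ltac:(intros x Hx; apply Hmax; lra)).
  lra.
Qed.

Lemma reaches_below : exists T1, T <= T1 /\ f T1 <= c.
Proof.
  apply NNPP. intros Hnever.
  assert (Habove : forall t, T <= t -> c < f t).
  { intros t Ht. apply Rnot_le_lt. intros Hft. apply Hnever. exists t. auto. }
  assert (HfT := Habove T (Rle_refl T)).
  set (s := T + (f T - c) / k + 1).
  assert (Hsk : ((f T - c) / k + 1) * k = f T - c + k) by (field; lra).
  assert (Hpos : 0 <= (f T - c) / k) by (apply Rdiv_le_0_compat; lra).
  destruct (MVT_gen f T s df) as [x [Hx Hmvt]];
    rewrite Rmin_left, Rmax_right in *; try (unfold s; lra).
  - intros x Hx. apply Hf. lra.
  - intros x Hx. apply (is_derive_continuity_pt _ _ _ (Hf x ltac:(lra))).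
  - assert (Hdfx := Hdf x ltac:(lra) (Habove x ltac:(lra))).
    assert (Hfs := Habove s ltac:(unfold s; lra)).
    assert (df x * (s - T) <= - k * (s - T))
      by (apply Rmult_le_compat_r; unfold s; lra).
    unfold s in *. nra.
Qed.

Lemma eventually_below :
  exists T1, T <= T1 /\ forall t, T1 <= t -> f t <= c.
Proof.
  destruct reaches_below as [T1 [HT1 HfT1]].
  exists T1. split; [exact HT1|].
  intros t Ht. exact (below_forever_after T1 t ltac:(lra) HfT1).
Qed.

End Trapping.

Lemma is_derive_ln_comp (w : R -> R) (t dw : R) :
  0 < w t -> is_derive w t dw -> is_derive (fun s => ln (w s)) t (dw / w t).
Proof.
  intros Hwt Hw.
  refine (eq_ind _ (is_derive _ t)
            (is_derive_comp ln w t _ _ (is_derive_ln _ Hwt) Hw) _ _).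
  unfold scal. simpl. unfold mult. simpl. field. lra.
Qed.

Section PerturbedLogistic.

Variables (w e : R -> R) (a b T0 : R).
Hypothesis Ha : 0 < a.
Hypothesis Hb : 0 < b.
Hypothesis Hwpos : forall t, T0 <= t -> 0 < w t.
Hypothesis Hw : forall t, T0 < t -> is_derive w t (w t * (a - b * w t + e t)).
Hypothesis He : is_lim e p_infty 0.

Lemma is_derive_ln_perturbed_logistic (t : R) :
  T0 < t -> is_derive (fun s => ln (w s)) t (a - b * w t + e t).
Proof.
  intros Ht. assert (Hwt := Hwpos t ltac:(lra)).
  replace (a - b * w t + e t) with (w t * (a - b * w t + e t) / w t)
    by (field; lra).
  exact (is_derive_ln_comp w t _ Hwt (Hw t Ht)).
Qed.

Lemma perturbed_logistic_eventually_near (d : R) :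
  0 < d < a / b -> exists T1, forall t, T1 <= t -> a / b - d <= w t <= a / b + d.
Proof.
  intros Hd.
  set (L := a / b). fold L in Hd.
  assert (HaL : a = b * L) by (unfold L; field; lra).
  set (k := b * d / 2).
  assert (Hk : 0 < k) by (unfold k; nra).
  apply is_lim_spec in He.
  destruct (He (mkposreal k Hk)) as [Te HTe]. simpl in HTe.
  set (T := Rmax Te T0 + 1).
  assert (HTe' := Rmax_l Te T0). assert (HT0 := Rmax_r Te T0).
  assert (Hsmall : forall t, T <= t -> 0 < w t /\ - k < e t < k).
  { intros t Ht. split; [apply Hwpos; unfold T in Ht; lra|].
    assert (Het := HTe t ltac:(unfold T in Ht; lra)).
    rewrite Rminus_0_r in Het. apply Rabs_def2 in Het. lra. }
  set (dv := fun t => a - b * w t + e t).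
  assert (Hv : forall t, T <= t -> is_derive (fun s => ln (w s)) t (dv t))
    by (intros t Ht; apply is_derive_ln_perturbed_logistic; unfold T in Ht; lra).
  destruct (eventually_below (fun s => ln (w s)) dv T (ln (L + d)) k Hk Hv)
    as [T1 [HT1 Hv_up]].
  { intros t Ht Habove. destruct (Hsmall t Ht) as [Hwt Het].
    apply ln_lt_inv in Habove; [|lra|lra].
    assert (b * (L + d) < b * w t) by (apply Rmult_lt_compat_l; lra).
    unfold dv, k in *. lra. }
  destruct (eventually_below (fun s => - ln (w s)) (fun s => - dv s) T
              (- ln (L - d)) k Hk (fun t Ht => is_derive_opp _ _ _ (Hv t Ht)))
    as [T2 [HT2 Hv_low]].
  { intros t Ht Hbelow. destruct (Hsmall t Ht) as [Hwt Het].
    assert (Hlt : w t < L - d) by (apply ln_lt_inv; lra).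
    assert (b * w t < b * (L - d)) by (apply Rmult_lt_compat_l; lra).
    unfold dv, k in *. lra. }
  exists (Rmax T1 T2). intros t Ht.
  assert (Ht1 := Rmax_l T1 T2). assert (Ht2 := Rmax_r T1 T2).
  destruct (Hsmall t ltac:(lra)) as [Hwt _].
  split; apply Rnot_lt_le; intros Hlt; apply ln_increasing in Hlt; try lra.
  - assert (Hv_low_t := Hv_low t ltac:(lra)). lra.
  - assert (Hv_up_t := Hv_up t ltac:(lra)). lra.
Qed.

Lemma perturbed_logistic_cvg : is_lim w p_infty (a / b).
Proof.
  assert (HL : 0 < a / b) by (apply Rdiv_lt_0_compat; lra).
  apply is_lim_spec. intros [eps Heps]. simpl.
  set (d := Rmin (eps / 2) (a / b / 2)).
  assert (Hd : 0 < d) by (apply Rmin_glb_lt; lra).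
  assert (Hd1 : d <= eps / 2) by apply Rmin_l.
  assert (Hd2 : d <= a / b / 2) by apply Rmin_r.
  destruct (perturbed_logistic_eventually_near d ltac:(lra)) as [T1 HT1].
  exists T1. intros t Ht. assert (Hnear := HT1 t ltac:(lra)).
  apply Rabs_def1; lra.
Qed.

End PerturbedLogistic.

Theorem lemma3p8 (n : nat) (hn : (2 <= n)%nat) (y z : R -> R)
  (Hy : forall t, 0 < t ->
     is_derive y t (z t ^ 2 * (INR n + 1 - y t) - INR n * y t))
  (Hz : forall t, 0 < t ->
     is_derive z t ((INR n + 1) / INR n * z t * (INR n - 1 + y t)
                    - (INR n + z t ^ 2) * z t))
  (Hypos : forall t, 0 <= t -> 0 < y t)
  (Hzpos : forall t, 0 <= t -> 0 < z t)
  (Hylim : is_lim y p_infty 0)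
  (Hzlim : is_lim z p_infty 0) :
  is_lim (fun t => z t ^ 2 / y t) p_infty
         ((INR n ^ 2 - 2) / (INR n * (INR n + 1))).
Proof.
  set (N := INR n).
  assert (HN : 2 <= N) by (apply (le_INR 2 n) in hn; simpl in hn; exact hn).
  replace ((N ^ 2 - 2) / (N * (N + 1))) with ((N ^ 2 - 2) / N / (N + 1))
    by (field; lra).
  apply (perturbed_logistic_cvg _ (fun t => 2 * (N + 1) / N * y t - z t ^ 2) _ _ 0).
  - apply Rdiv_lt_0_compat; nra.
  - lra.
  - intros t Ht. apply Rdiv_lt_0_compat; [apply pow_lt|]; auto.
  - intros t Ht. assert (Hyt := Hypos t ltac:(lra)).
    assert (Hw := is_derive_div _ _ t _ _ (is_derive_pow z 2 t _ (Hz t Ht))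
                    (Hy t Ht) ltac:(lra)).
    refine (eq_ind _ (is_derive _ t) Hw _ _).
    simpl. fold N. field. lra.
  - eapply is_lim_minus.
    + apply is_lim_scal_l, Hylim.
    + apply (is_lim_ext (fun t => z t * z t)); [intros t; ring|].
      apply is_lim_mult; [exact Hzlim|exact Hzlim|exact I].
    + unfold is_Rbar_minus, is_Rbar_plus. simpl. do 2 apply f_equal. ring.
Qed.
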